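(* Let $a,b,c,d\in\mathbb C$ with $a\notin\mathbb Z$ and $d\notin\{0,-1,-2,\dots\}$. Then, as an identity of formal power series in $x,y$, $$\mathrm H_2(a,b,c;d;x,y)=F(a,b;d;x)\,{}_1F_1(c;1-a;-y)+\sum_{k=1}^\infty\sum_{l=1}^k\frac{(-1)^{k+l}(k-1)!}{(l-1)!\,l!\,(k-l)!}\,\frac{(b)_k(c)_l}{(1-a)_l(d)_k}\,x^ky^l\,F(a+k,b+k;d+k;x)\,{}_1F_1(c+l;1-a+l;-y).$$
   Context: Pochhammer symbol: $(\lambda)_k=\Gamma(\lambda+k)/\Gamma(\lambda)$ for every integer $k$ (possibly negative) whenever defined; $(\lambda)_0=1$. $F(a,b;c;x)=\sum_{k\ge0}\frac{(a)_k(b)_k}{(c)_k k!}x^k$, ${}_1F_1(a;c;x)=\sum_{k\ge0}\frac{(a)_k}{(c)_k k!}x^k$. Confluent Horn function $\mathrm H_2(a,b,c;d;x,y)=\sum_{p,q\ge0}\frac{(a)_{p-q}(b)_p(c)_q}{(d)_p\,p!\,q!}x^py^q$. All functions are regarded as formal power series in $x,y$; the infinite double sum converges in the formal (degree) topology. *)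

(* Formal power series in two variables x, y over a field F
   are represented by their coefficient functions  s p q = [x^p y^q] s. *)
From HB Require Import structures.
From mathcomp Require Import all_boot all_order all_algebra.
Set Implicit Arguments. Unset Strict Implicit. Unset Printing Implicit Defensive.
Import Order.TTheory GRing.Theory Num.Theory.
Local Open Scope ring_scope.

Section Defs.
Variable F : fieldType.

Definition series := nat -> nat -> F.

Definition poch (l : F) (k : nat) : F := \prod_(i < k) (l + i%:R).

(* Pochhammer symbol for integer k, i.e. Gamma(l+k)/Gamma(l):
   for k = -(n+1) (Negz n) it is 1/((l-1)(l-2)...(l-(n+1))). *)
Definition pochz (l : F) (k : int) : F :=
  match k with
  | Posz n => poch l n
  | Negz n => (\prod_(i < n.+1) (l - (i.+1)%:R))^-1
  end.

Definition sadd (s t : series) : series := fun p q => s p q + t p q.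
Definition smul (s t : series) : series := fun p q =>
  \sum_(i < p.+1) \sum_(j < q.+1) s i j * t (p - i)%N (q - j)%N.
Definition sscale (r : F) (s : series) : series := fun p q => r * s p q.
Definition smono (k l : nat) : series := fun p q =>
  if (p == k) && (q == l) then 1 else 0.

(* Formal (degree-topology) sum of a family T k l of series such that
   T k l is divisible by x^k y^l (so only finitely many terms contribute
   to each coefficient): coefficient of x^p y^q. *)
Definition fsum2 (T : nat -> nat -> series) : series := fun p q =>
  \sum_(k < p.+1) \sum_(l < q.+1) T k l p q.

Definition F21x (a b c : F) : series := fun p q =>
  if q == 0%N then poch a p * poch b p / (poch c p * p`!%:R) else 0.

Definition F11my (a c : F) : series := fun p q =>
  if p == 0%N then poch a q / (poch c q * q`!%:R) * (-1) ^+ q else 0.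

Definition H2 (a b c d : F) : series := fun p q =>
  pochz a (p%:Z - q%:Z) * poch b p * poch c q / (poch d p * p`!%:R * q`!%:R).

Definition H2term (a b c d : F) (k l : nat) : series :=
  if (1 <= l)%N && (l <= k)%N then
    sscale ((-1) ^+ (k + l) * (k.-1)`!%:R / ((l.-1)`!%:R * l`!%:R * (k - l)`!%:R)
              * (poch b k * poch c l) / (poch (1 - a) l * poch d k))
      (smul (smono k l)
         (smul (F21x (a + k%:R) (b + k%:R) (d + k%:R))
               (F11my (c + l%:R) (1 - a + l%:R))))
  else fun _ _ => 0.

End Defs.

(* The reflection formula
   (a)_(p-q) (1-a)_q = (-1)^q (a-q)_p turns the coefficient of H2 into
   K (a-q)_p, while that of F(a,b;d;x) 1F1(c;1-a;-y) is K (a)_p with the same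
   factor K.  By Chu--Vandermonde, (a-q)_p - (a)_p is the sum over 1 <= k <= p of
   C(p,k) (-1)^k (q)_k (a+k)_(p-k), and (q)_k / k! = C(q+k-1,k) splits further as
   the sum over 1 <= l <= k of C(q,l) C(k-1,l-1); the (k,l) summand is exactly
   the coefficient of x^p y^q in the (k,l) term of the double sum. *)

From HB Require Import structures.
From mathcomp Require Import all_boot all_order all_algebra.
From mathcomp Require Import ring zify.
From Stdlib Require Import FunctionalExtensionality.
Set Implicit Arguments.
Unset Strict Implicit.
Unset Printing Implicit Defensive.
Import Order.TTheory GRing.Theory Num.Theory.

Lemma bin_addn_pred_sum q k : 0 < k ->
  'C(q + k.-1, k) = \sum_(l < q.+1 | 0 < l <= k) 'C(q, l) * 'C(k.-1, l.-1).
Proof.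
move=> k_gt0; rewrite -binomial.Vandermonde.
have le_k : k.+1 <= (q + k).+1 by rewrite ltnS leq_addl.
have le_q : q.+1 <= (q + k).+1 by rewrite ltnS leq_addr.
rewrite (big_ord_widen _ (fun j => 'C(q, j) * 'C(k.-1, k - j)) le_k).
rewrite big_mkcond (big_ord_widen_cond _ (fun l => 0 < l <= k)
  (fun l => 'C(q, l) * 'C(k.-1, l.-1)) le_q) [in RHS]big_mkcond /=.
apply: eq_bigr => -[j /= _] _.
case: j => [|j]; first by rewrite /= subn0 (@bin_small k.-1 k) ?muln0 ?ltn_predL.
rewrite ltnS /=; case: (ltnP j k) => [lt_jk|_] //=.
case: ltnP => [_|le_qj]; last by rewrite bin_small.
have -> : k - j.+1 = k.-1 - j by lia.
by rewrite bin_sub // -ltnS prednK.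
Qed.

Local Open Scope ring_scope.

Section Pochhammer.
Variable F : fieldType.
Implicit Types (x u : F) (n m p : nat).

Lemma poch0 x : poch x 0 = 1.
Proof. by rewrite /poch big_ord0. Qed.

Lemma pochSr x n : poch x n.+1 = poch x n * (x + n%:R).
Proof. by rewrite /poch big_ord_recr. Qed.

Lemma pochSl x n : poch x n.+1 = x * poch (x + 1) n.
Proof.
rewrite /poch big_ord_recl /= addr0; congr (_ * _).
by apply: eq_bigr => i _; rewrite /bump /= add1n -natr1 addrA addrAC.
Qed.

Lemma pochD x m n : poch x (m + n) = poch x m * poch (x + m%:R) n.
Proof.
elim: n => [|n IHn]; first by rewrite addn0 poch0 mulr1.
by rewrite addnS !pochSr IHn natrD addrA mulrA.
Qed.

Lemma poch_split x m n : (m <= n)%N -> poch x n = poch x m * poch (x + m%:R) (n - m).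
Proof. by move=> le_mn; rewrite -{1}(subnKC le_mn) pochD. Qed.

Lemma poch_neq0 x n : (forall i, (i < n)%N -> x + i%:R != 0) -> poch x n != 0.
Proof. by move=> nz; apply/prodf_neq0 => i _; apply: nz. Qed.

Lemma poch_subn x n : poch (x - n%:R) n = \prod_(i < n) (x - i.+1%:R).
Proof.
elim: n x => [|n IHn] x; first by rewrite poch0 big_ord0.
rewrite pochSl big_ord_recr /= mulrC -IHn; congr (poch _ _ * _).
by rewrite -natr1; ring.
Qed.

Lemma poch_reflect x n : poch (1 - x) n = (-1) ^+ n * poch (x - n%:R) n.
Proof.
elim: n => [|n IHn]; first by rewrite !poch0 expr0 mulr1.
rewrite pochSr IHn pochSl exprS -[n.+1%:R]natr1.
have -> : x - (n%:R + 1) + 1 = x - n%:R by ring.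
ring.
Qed.

Lemma pochz_reflect x p q : (forall n, x != n.+1%:R) ->
  pochz x (p%:Z - q%:Z) * poch (1 - x) q = (-1) ^+ q * poch (x - q%:R) p.
Proof.
move=> x_npos; rewrite poch_reflect mulrCA; congr (_ * _).
have [le_qp | lt_pq] := leqP q p.
  by rewrite subzn //= (poch_split _ le_qp) subrK mulrC.
have -> : p%:Z - q%:Z = Negz (q - p).-1.
  by rewrite NegzE prednK ?subn_gt0 // -subzn ?(ltnW lt_pq) // opprB.
have shift : x - q%:R + p%:R = x - (q - p)%N%:R by rewrite natrB ?(ltnW lt_pq) //; ring.
rewrite /= prednK ?subn_gt0 // (poch_split _ (ltnW lt_pq)) shift poch_subn mulrC mulfK //.
by apply/prodf_neq0 => i _; rewrite subr_eq0.
Qed.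

Lemma poch_nat n k : poch n%:R k = ('C((n + k).-1, k) * k`!)%:R :> F.
Proof.
elim: k => [|k IHk]; first by rewrite poch0 bin0.
rewrite pochSr IHk addnS /= factS mulnCA mulnA -mul_bin_diag !natrM natrD; ring.
Qed.

Lemma poch_subr_sum x u p : poch (x - u) p =
  \sum_(k < p.+1) 'C(p, k)%:R * (-1) ^+ k * poch u k * poch (x + k%:R) (p - k).
Proof.
elim: p x => [|p IHp] x; first by rewrite big_ord1 /= !poch0 !mulr1.
have -> : poch (x - u) p.+1 = (x - u) * poch (x + 1 - u) p.
  by rewrite pochSl; congr (_ * poch _ _); ring.
rewrite IHp big_distrr /=.
have split_term (k : 'I_p.+1) : (x - u) *
    ('C(p, k)%:R * (-1) ^+ k * poch u k * poch (x + 1 + k%:R) (p - k))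
  = 'C(p, k)%:R * (-1) ^+ k * poch u k * poch (x + k%:R) (p.+1 - k)
    + 'C(p, k)%:R * (-1) ^+ k.+1 * poch u k.+1 * poch (x + k.+1%:R) (p - k).
  rewrite (@subSn k p (ltn_ord k)) pochSl pochSr exprS -natr1.
  have -> : x + k%:R + 1 = x + 1 + k%:R by ring.
  have -> : x + (k%:R + 1) = x + 1 + k%:R by ring.
  ring.
rewrite (eq_bigr _ (fun k _ => split_term k)) big_split /=.
rewrite [in RHS]big_ord_recl [X in X + _ = _]big_ord_recl /= !bin0 !subn0 -addrA.
congr (_ + _).
under [in RHS]eq_bigr => k _ do
  rewrite /bump /= add1n binS natrD !mulrDl subSS.
rewrite big_split /=; congr (_ + _).
by rewrite [in RHS]big_ord_recr /= bin_small // !mul0r addr0.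
Qed.

Lemma poch_subn_sum x p q : poch (x - q%:R) p = poch x p +
  \sum_(k < p.+1) \sum_(l < q.+1) (if (0 < l <= k)%N then
     (-1) ^+ k * (p ^_ k * 'C(q, l) * 'C(k.-1, l.-1))%:R * poch (x + k%:R) (p - k)
   else 0).
Proof.
rewrite poch_subr_sum !big_ord_recl /= big1_eq !add0r bin0 subn0 addr0 poch0 !mulr1 mul1r.
congr (_ + _); apply: eq_bigr => k _.
rewrite /bump /= add1n -big_mkcond /=.
under eq_bigr => l _ do rewrite -mulnA natrM mulrCA mulrA.
rewrite -big_distrl -big_distrr /= -natr_sum add0n -bin_addn_pred_sum //.
rewrite poch_nat addnS /=.
by rewrite -(bin_ffact p k.+1) !natrM; ring.
Qed.

End Pochhammer.

Section SeriesProducts.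
Variable F : fieldType.
Implicit Types s t : series F.

Lemma smul_smonoE k l s p q : smul (smono F k l) s p q =
  if (k <= p)%N && (l <= q)%N then s (p - k)%N (q - l)%N else 0.
Proof.
transitivity (\sum_(i < p.+1 | i == k :> nat)
                \sum_(j < q.+1 | j == l :> nat) s (p - i)%N (q - j)%N).
  rewrite /smul /smono [RHS]big_mkcond; apply: eq_bigr => i _.
  have [_ | _] := eqP; last by rewrite big1 // => j _; rewrite mul0r.
  rewrite [RHS]big_mkcond; apply: eq_bigr => j _.
  by case: eqP; rewrite (mul1r, mul0r).
rewrite (big_ord1_eq _ (fun i => \sum_(j < q.+1 | j == l :> nat) s (p - i)%N (q - j)%N)).
by rewrite (big_ord1_eq _ (fun j => s (p - k)%N (q - j)%N)) !ltnS; case: (k <= p)%N.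
Qed.

Lemma smul_xseries_yseries s t p q :
    (forall i j, (0 < j)%N -> s i j = 0) -> (forall i j, (0 < i)%N -> t i j = 0) ->
  smul s t p q = s p 0%N * t 0%N q.
Proof.
move=> s_x t_y; rewrite /smul big_ord_recr /= big1 ?add0r; last first.
  by move=> i _; apply: big1 => j _; rewrite t_y ?mulr0 // subn_gt0.
by rewrite big_ord_recl /= big1 ?subnn ?subn0 ?addr0 // => j _; rewrite s_x ?mul0r.
Qed.

End SeriesProducts.

Section HornExpansion.
Variables (F : fieldType) (a b c d : F).
Hypothesis charF0 : [pchar F] =i pred0.
Hypothesis a_nint : forall z : int, a != z%:~R.
Hypothesis d_npos : forall n : nat, d != - n%:R.

Let natr_neq0 n : (0 < n)%N -> n%:R != 0 :> F.
Proof. by move/pcharf0P: charF0 => ->; rewrite -lt0n. Qed.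

Let fact_neq0 n : n`!%:R != 0 :> F.
Proof. exact/natr_neq0/fact_gt0. Qed.

Let poch_d_neq0 k n : poch (d + k%:R) n != 0.
Proof. by apply: poch_neq0 => i _; rewrite -addrA -natrD addr_eq0. Qed.

Let poch_1a_neq0 k n : poch (1 - a + k%:R) n != 0.
Proof.
apply: poch_neq0 => i _.
have -> : 1 - a + k%:R + i%:R = (k + i).+1%:R - a by rewrite -addn1 !natrD; ring.
by rewrite subr_eq0 eq_sym (a_nint (k + i).+1).
Qed.

Let poch_d0_neq0 n : poch d n != 0.
Proof. by have := poch_d_neq0 0 n; rewrite addr0. Qed.

Let poch_1a0_neq0 n : poch (1 - a) n != 0.
Proof. by have := poch_1a_neq0 0 n; rewrite addr0. Qed.

Definition h2_factor p q : F := poch b p * poch c q * (-1) ^+ q /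
  (poch d p * poch (1 - a) q * p`!%:R * q`!%:R).

Lemma H2_coef p q : H2 a b c d p q = h2_factor p q * poch (a - q%:R) p.
Proof.
have a_npos n : a != n.+1%:R by exact: (a_nint n.+1).
have := pochz_reflect p q a_npos; rewrite /H2 /h2_factor => reflect_pq.
have -> : pochz a (p%:Z - q%:Z) = (-1) ^+ q * poch (a - q%:R) p / poch (1 - a) q.
  by rewrite -reflect_pq mulfK.
by field; rewrite !fact_neq0 poch_1a0_neq0 poch_d0_neq0.
Qed.

Lemma F21x_F11my_coef p q :
  smul (F21x a b d) (F11my c (1 - a)) p q = h2_factor p q * poch a p.
Proof.
rewrite smul_xseries_yseries => [|i [|j] //|[|i] j //].
rewrite /F21x /F11my /h2_factor /=.
by field; rewrite !fact_neq0 poch_1a0_neq0 poch_d0_neq0.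
Qed.

Lemma H2term_coef k l p q : (0 < l <= k)%N -> (k <= p)%N -> (l <= q)%N ->
  H2term a b c d k l p q = h2_factor p q *
    ((-1) ^+ k * (p ^_ k * 'C(q, l) * 'C(k.-1, l.-1))%:R * poch (a + k%:R) (p - k)).
Proof.
move=> /[dup] /andP[l_gt0 le_lk] lk le_kp le_lq.
rewrite /H2term lk /sscale smul_smonoE le_kp le_lq.
rewrite smul_xseries_yseries => [|i [|j] //|[|i] j //].
rewrite /F21x /F11my /h2_factor /=.
rewrite (poch_split b le_kp) (poch_split d le_kp) (poch_split c le_lq).
rewrite (poch_split (1 - a) le_lq).
have fact_p : p`!%:R = (p ^_ k)%:R * (p - k)`!%:R :> F by rewrite -natrM ffact_fact.
have fact_q : q`!%:R = 'C(q, l)%:R * (l`!%:R * (q - l)`!%:R) :> F.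
  by rewrite -!natrM bin_fact.
have fact_k : (k.-1)`!%:R = 'C(k.-1, l.-1)%:R * ((l.-1)`!%:R * (k - l)`!%:R) :> F.
  have -> : (k - l = k.-1 - l.-1)%N by lia.
  by rewrite -!natrM bin_fact //; lia.
rewrite fact_p fact_q fact_k !natrM exprD (exprB le_lq) ?unitrN1 //.
field.
by rewrite signr_eq0 !fact_neq0 !poch_1a_neq0 !poch_d_neq0 poch_d0_neq0 poch_1a0_neq0
  !natr_neq0 ?bin_gt0 ?ffact_gt0.
Qed.

End HornExpansion.

Theorem mainTheorem4 (F : fieldType) (charF0 : [pchar F] =i pred0)
  (a b c d : F)
  (ha : forall z : int, a != z%:~R)
  (hd : forall n : nat, d != - n%:R) :
  H2 a b c d =
  sadd (smul (F21x a b d) (F11my c (1 - a))) (fsum2 (H2term a b c d)).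
Proof.
apply: functional_extensionality => p; apply: functional_extensionality => q.
rewrite /sadd /fsum2 (H2_coef b c charF0 ha hd) (F21x_F11my_coef b c charF0 ha hd).
rewrite poch_subn_sum mulrDr; congr (_ + _).
rewrite big_distrr; apply: eq_bigr => k _; rewrite big_distrr; apply: eq_bigr => l _.
have [lk | not_lk] := boolP (0 < l <= k)%N.
  by rewrite (H2term_coef b c charF0 ha hd lk) // -ltnS.
by rewrite /H2term (negbTE not_lk) /= mulr0.
Qed.
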